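(* Let $(X,G)$ be an association scheme. Assume there exist $c,k,\ell\in\mathbb{N}$ and real numbers $0<\delta_1,\delta'_1,\delta'_2\leq 1$ with $1<\ell<(\delta_1^2/\delta'_1)\cdot k$ such that for all $g\in G$ with $g\neq 1$, \[\delta_1 k\leq n_g\leq \delta'_1 k \quad\text{and}\quad c(g)\leq \delta'_2 c.\] If $|G|\geq 2(\delta'_1/\delta_1)^3\delta'_2\cdot\frac{c}{\ell-1}+2$, then there exist relations $u,v,w,w'\in G\setminus\{1\}$ with $u\neq v$ and $w\neq w'$ such that $0<c^{w}_{u^{*}v}\leq c^{w'}_{u^{*}v}<\ell$.
   Context: An association scheme is a pair $(X,G)$ where $X$ is a finite set and $G$ is a partition of $X\times X$ such that (1) $G$ contains the identity relation $1:=\{(x,x)\mid x\in X\}$; (2) if $g\in G$ then $g^{*}:=\{(y,x)\mid (x,y)\in g\}\in G$; (3) for all $f,g,h\in G$ there is an integer $c^{h}_{fg}$ (intersection number) such that for all $(\alpha,\beta)\in h$, $c^{h}_{fg}=\#\{\gamma\in X\mid (\alpha,\gamma)\in f,\ (\gamma,\beta)\in g\}$. Elements of $G$ are called relations. For $g\in G$, its valency is $n_g:=c^{1}_{gg^{*}}$ and its indistinguishing number is $c(g):=\sum_{v\in G}c^{g}_{vv^{*}}$. *)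

From HB Require Import structures.
From mathcomp Require Import all_boot all_order all_algebra.
Set Implicit Arguments. Unset Strict Implicit. Unset Printing Implicit Defensive.

(* An association scheme (X,G) is encoded by:
   - X : finType (the point set),
   - I : finType indexing the relations of G,
   - r : X -> X -> I, with r x y = the relation containing (x,y);
     the relations are the nonempty fibres of r (surjectivity => every
     index is a genuine nonempty relation, so G = partition of X*X, |G| = #|I|),
   - one : I, the index of the identity relation 1,
   - star : I -> I, g |-> g^*. *)
Definition is_assoc_scheme (X I : finType) (r : X -> X -> I) (one : I)
    (star : I -> I) : Prop :=
  [/\ (forall i : I, exists x y, r x y = i),
      (forall x y : X, (r x y == one) = (x == y)),
      (forall x y : X, r y x = star (r x y)) &
      (forall (f g h : I) (a b a' b' : X), r a b = h -> r a' b' = h ->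
         #|[set z | (r a z == f) && (r z b == g)]| =
         #|[set z | (r a' z == f) && (r z b' == g)]|)].

(* intersection number c^h_{fg}, computed at some (alpha,beta) in h *)
Definition inum (X I : finType) (r : X -> X -> I) (h f g : I) : nat :=
  match [pick p : X * X | r p.1 p.2 == h] with
  | Some p => #|[set z | (r p.1 z == f) && (r z p.2 == g)]|
  | None => 0
  end.

Definition valency (X I : finType) (r : X -> X -> I) (one : I) (star : I -> I)
    (g : I) : nat := inum r one g (star g).

Definition indist (X I : finType) (r : X -> X -> I) (star : I -> I) (g : I) : nat :=
  \sum_(v : I) inum r g v (star v).

(* Fix a point a and a relation s <> 1, and for v write x_b = c^{r(a,b)}_{s v}, the
   number of z with r(a,z) = s and r(z,b) = v.  Double counting gives
   sum_b x_b = n_s n_v, while sum_b x_b (x_b - 1) counts the ordered pairs z <> z' of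
   s-neighbours of a with a common v-neighbour b; summed over v this is
   sum_{z <> z'} c(r(z,z')) <= n_s^2 d2' c.
   If the conclusion fails (with u = s^* ), then for every v outside {1, s^*} the points
   b with 0 < x_b < l all lie in a single nontrivial relation r(a,b), so there are at
   most d1' k of them.  As x (x - 1) >= (l - 1) x - l^2/4, with the correction needed
   only when 0 < x < l, each such v contributes at least
   (l - 1) (d1 k)^2 - l^2 d1' k / 4, and the |G| - 2 contributions together exceed
   the upper bound.  When c = 0 the argument degenerates; instead, two distinct
   s-neighbours z, z' of a would give c(r(z,z')) > 0, so n_s <= 1, contradicting
   l < (d1^2 / d1') k. *)

From HB Require Import structures.
From mathcomp Require Import all_boot all_order all_algebra.
From mathcomp Require Import ring lra.
Import Order.TTheory GRing.Theory Num.Theory.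
Set Implicit Arguments. Unset Strict Implicit. Unset Printing Implicit Defensive.

Section AssociationScheme.

Variables (X I : finType) (r : X -> X -> I) (one : I) (star : I -> I).
Hypothesis scheme : is_assoc_scheme r one star.

Local Notation n_ := (valency r one star).

Lemma starK : involutive star.
Proof. by case: scheme => surj _ r_star _ i; have [x [y <-]] := surj i; rewrite -!r_star. Qed.

Lemma r_swap x y : r y x = star (r x y).
Proof. by case: scheme. Qed.

Lemma r_eq_one x y : (r x y == one) = (x == y).
Proof. by case: scheme. Qed.

Lemma star_one : star one = one.
Proof.
case: scheme => surj _ _ _; have [x [y _]] := surj one.
have /eqP r_xx : r x x == one by rewrite r_eq_one.
by rewrite -r_xx -r_swap.
Qed.

Lemma star_eq_one s : (star s == one) = (s == one).
Proof. by rewrite (can2_eq starK starK) star_one. Qed.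

Lemma inumE h f g a b : r a b = h ->
  inum r h f g = \sum_(z | r a z == f) (r z b == g : nat).
Proof.
move=> r_ab; rewrite /inum; case: pickP => [p /eqP r_p | /(_ (a, b))]; last first.
  by rewrite /= r_ab eqxx.
case: scheme => _ _ _ regular; rewrite (regular f g h _ _ _ _ r_p r_ab).
by rewrite -sum1dep_card big_mkcondr; apply: eq_bigr => z _; case: (_ == g).
Qed.

Lemma valencyE a g : n_ g = \sum_(z | r a z == g) 1.
Proof.
have r_aa : r a a = one by apply/eqP; rewrite r_eq_one.
rewrite /valency (inumE _ _ r_aa); apply: eq_bigr => z r_az.
by rewrite r_swap (eqP r_az) eqxx.
Qed.

Definition npaths a s v b : nat := \sum_(z | r a z == s) (r z b == v : nat).

Definition ncommon v z z' : nat := \sum_b ((r z b == v) * (r z' b == v))%N.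

Definition npairs a s v : nat :=
  \sum_(z | r a z == s) \sum_(z' | (r a z' == s) && (z' != z)) ncommon v z z'.

Lemma npathsE a s v b : inum r (r a b) s v = npaths a s v b.
Proof. exact: inumE. Qed.

Lemma ncommonE v z z' : ncommon v z z' = inum r (r z z') v (star v).
Proof.
rewrite (inumE _ _ (erefl (r z z'))) /ncommon [RHS]big_mkcond /=.
apply: eq_bigr => b _.
by rewrite [r z' b]r_swap (can2_eq starK starK); case: (r z b == v); case: (_ == star v).
Qed.

Lemma npaths_self a s v : v != star s -> npaths a s v a = 0.
Proof.
move=> v_neq; rewrite /npaths big1 // => z /eqP r_az.
by rewrite r_swap r_az eq_sym (negbTE v_neq).
Qed.

Lemma sum_npaths a s v : \sum_b npaths a s v b = (n_ s * n_ v)%N.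
Proof.
rewrite /npaths exchange_big (valencyE a) big_distrl /=; apply: eq_bigr => z _.
by rewrite mul1n (valencyE z) [RHS]big_mkcond.
Qed.

Lemma sum_npaths_sq a s v :
  \sum_b (npaths a s v b ^ 2)%N = (\sum_b npaths a s v b + npairs a s v)%N.
Proof.
have -> : \sum_b (npaths a s v b ^ 2)%N =
    \sum_(z | r a z == s) \sum_(z' | r a z' == s) ncommon v z z'.
  rewrite /npaths /ncommon; under eq_bigr => b _ do rewrite expnS expn1 big_distrl /=.
  rewrite exchange_big /=; apply: eq_bigr => z _.
  under eq_bigr => b _ do rewrite big_distrr /=.
  by rewrite exchange_big.
have -> : \sum_b npaths a s v b = \sum_(z | r a z == s) ncommon v z z.
  rewrite /npaths exchange_big /=; apply: eq_bigr => z _; apply: eq_bigr => b _.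
  by case: (r z b == v).
by rewrite /npairs -big_split /=; apply: eq_bigr => z r_az; rewrite (bigD1 z).
Qed.

Lemma sum_npairs a s : \sum_v npairs a s v =
  \sum_(z | r a z == s) \sum_(z' | (r a z' == s) && (z' != z)) indist r star (r z z').
Proof.
rewrite /npairs exchange_big /=; apply: eq_bigr => z _.
rewrite exchange_big /=; apply: eq_bigr => z' _.
by apply: eq_bigr => v _; rewrite ncommonE.
Qed.

Lemma indist_gt0 a z z' : r a z = r a z' -> 0 < indist r star (r z z').
Proof.
move=> r_az; rewrite /indist (bigD1 (star (r a z))) //= ltn_addr //.
rewrite (inumE _ _ (erefl (r z z'))) (bigD1 a) /=; last by rewrite r_swap.
by rewrite starK r_az eqxx.
Qed.

Lemma valency_le1 s :
  (forall g, g != one -> indist r star g = 0) -> n_ s <= 1.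
Proof.
move=> indist0; case: scheme => surj _ _ _; have [a _] := surj one.
rewrite (valencyE a) sum1dep_card; apply/card_le1_eqP => z z'.
rewrite !inE => /eqP r_az /eqP r_az'; apply/eqP; rewrite -r_eq_one.
apply: contraT => r_neq1; have := indist_gt0 (etrans r_az' (esym r_az)).
by rewrite indist0.
Qed.

Lemma npaths_gt0_neq_one a s v b : v != star s -> 0 < npaths a s v b -> r a b != one.
Proof.
move=> v_neq; apply: contraTneq => /eqP; rewrite r_eq_one => /eqP <-.
by rewrite npaths_self.
Qed.

(* The conclusion of the main theorem for u = star s. *)
Definition small_pair (l : nat) s v : bool :=
  [exists w, exists w', [&& w != one, w' != one & w != w'] &&
     [&& 0 < inum r w s v, inum r w s v <= inum r w' s v & inum r w' s v < l]].

Lemma small_npaths_same_relation l a s v b b' :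
  v != star s -> ~~ small_pair l s v ->
  0 < npaths a s v b < l -> 0 < npaths a s v b' < l -> r a b = r a b'.
Proof.
move=> v_neq no_small.
wlog le_bb' : b b' / npaths a s v b <= npaths a s v b'.
  move=> gen Bb Bb'; have [le | /ltnW le] := leqP (npaths a s v b) (npaths a s v b').
    exact: gen.
  exact/esym/gen.
move=> /andP[b_gt0 _] /andP[b'_gt0 b'_lt]; apply/eqP; apply: contraNT no_small => r_neq.
apply/existsP; exists (r a b); apply/existsP; exists (r a b').
by rewrite !npathsE b_gt0 le_bb' b'_lt r_neq !(npaths_gt0_neq_one v_neq).
Qed.

End AssociationScheme.

Local Open Scope ring_scope.

Lemma natr_sqr_sub_ge (R : realFieldType) (x l : nat) :
  (l%:R - 1) * x%:R - (0 < x < l)%N%:R * (l%:R ^+ 2 / 4)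
    <= x%:R ^+ 2 - x%:R :> R.
Proof.
have x_ge0 : 0 <= x%:R :> R := ler0n _ x.
have [-> | _] := posnP x; first by rewrite !mul0r !mulr0 expr0n !subrr.
have [_ | l_le] := ltnP x l; rewrite /= ?mul1r ?mul0r ?subr0.
  have := sqr_ge0 (x%:R - l%:R / 2 : R); nra.
have : l%:R <= x%:R :> R by rewrite ler_nat.
nra.
Qed.

Lemma counting_absurd (R : realFieldType) (m L K d1 d1' d2' c : R) :
  0 < d1 <= d1' -> 0 < d2' -> 0 < c -> 2 <= L -> 0 < K ->
  L < (d1 ^+ 2 / d1') * K ->
  2 * (d1' / d1) ^+ 3 * d2' * (c / (L - 1)) <= m ->
  m * ((L - 1) * (d1 * K * (d1 * K)) - L ^+ 2 / 4 * (d1' * K))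
    <= d1' * K * (d1' * K) * (d2' * c) -> False.
Proof.
move=> /andP[d1_gt0 d1_le] d2'_gt0 c_gt0 L_ge2 K_gt0 L_lt m_ge m_bound.
have d1'_gt0 : 0 < d1' by apply: lt_le_trans d1_le.
set E := d1' / d1.
have d1'E : d1' = E * d1 by rewrite /E mulrVK // unitfE gt_eqF.
have E_ge1 : 1 <= E by rewrite /E ler_pdivlMr // mul1r.
have {}L_lt : L * d1' < d1 ^+ 2 * K by rewrite -ltr_pdivlMr // mulrAC.
have {}m_ge : 2 * E ^+ 3 * d2' * c <= m * (L - 1).
  by move: m_ge; rewrite !mulrA ler_pdivrMr //; lra.
set A := d1 * K * (d1 * K).
have A_gt0 : 0 < A by rewrite /A !mulr_gt0.
have E3_gt0 : 0 < E ^+ 3 * d2' * c.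
  by do 2 apply: mulr_gt0 => //; apply: exprn_gt0; lra.
have m_gt0 : 0 < m by nra.
have beta_gt : (L - 1) / 2 * A < (L - 1) * A - L ^+ 2 / 4 * (d1' * K).
  have : L * d1' * (L * K) < d1 ^+ 2 * K * (L * K) by rewrite ltr_pM2r ?mulr_gt0 //; lra.
  rewrite /A; nra.
have E_A : d1' * K * (d1' * K) = E ^+ 2 * A by rewrite d1'E /A; ring.
have beta_bound : E ^+ 3 * d2' * c * A < m * ((L - 1) * A - L ^+ 2 / 4 * (d1' * K)) by nra.
have E2_le : E ^+ 2 * (d2' * c * A) <= E ^+ 3 * (d2' * c * A).
  by rewrite ler_pM2r ?mulr_gt0 // exprS ler_peMl // -expr2 sqr_ge0.
rewrite -/A E_A in m_bound; lra.
Qed.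

Section SchemeEstimates.

Variables (X I : finType) (r : X -> X -> I) (one : I) (star : I -> I).
Hypothesis scheme : is_assoc_scheme r one star.
Variable R : realFieldType.

Local Notation n_ := (valency r one star).
Local Notation npaths := (npaths r).
Local Notation npairs := (npairs r).

Lemma npairs_ge l a s v (K : R) :
  v != star s -> ~~ small_pair r one l s v -> 0 <= K ->
  (forall g, g != one -> (n_ g)%:R <= K) ->
  (l%:R - 1) * (n_ s * n_ v)%:R - l%:R ^+ 2 / 4 * K <= (npairs a s v)%:R.
Proof.
move=> v_neq no_small K_ge0 n_le.
set B := [set b | 0 < npaths a s v b < l]%N.
have card_B : #|B|%:R <= K.
  have [-> | [b0 Bb0]] := set_0Vmem B; first by rewrite cards0.
  move: (Bb0); rewrite inE => /[dup] Bb0' /andP[b0_gt0 _].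
  apply: le_trans (n_le _ (npaths_gt0_neq_one scheme v_neq b0_gt0)).
  rewrite ler_nat (valencyE scheme a) sum1dep_card; apply/subset_leq_card/subsetP => b Bb.
  rewrite inE in Bb; rewrite inE.
  by rewrite (small_npaths_same_relation scheme v_neq no_small Bb Bb0').
have npairsE : (npairs a s v)%:R = \sum_b ((npaths a s v b)%:R ^+ 2 - (npaths a s v b)%:R) :> R.
  rewrite sumrB (eq_bigr (fun b => (npaths a s v b ^ 2)%N%:R)) => [|b _]; last first.
    by rewrite natrX.
  by rewrite -!natr_sum sum_npaths_sq // natrD addrC addKr.
rewrite npairsE -(sum_npaths scheme a) natr_sum mulr_sumr.
apply: le_trans (ler_sum _ (fun b _ => natr_sqr_sub_ge R (npaths a s v b) l)).
rewrite sumrB lerD2l lerN2 -mulr_suml -natr_sum.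
have -> : (\sum_b (0 < npaths a s v b < l))%N = #|B|.
  by rewrite -sum1dep_card [RHS]big_mkcond; apply: eq_bigr => b _; case: (_ && _).
by rewrite mulrC ler_wpM2l // divr_ge0 // sqr_ge0.
Qed.

Lemma sum_npairs_le a s (q : R) : 0 <= q ->
  (forall g, g != one -> (indist r star g)%:R <= q) ->
  \sum_v (npairs a s v)%:R <= (n_ s)%:R ^+ 2 * q.
Proof.
move=> q_ge0 indist_le.
have n_sE : (n_ s)%:R = \sum_(z | r a z == s) 1 :> R by rewrite (valencyE scheme a) natr_sum.
rewrite -natr_sum (sum_npairs scheme) natr_sum expr2 -mulrA {1}n_sE mulr_suml.
apply: ler_sum => z r_az; rewrite mul1r natr_sum n_sE mulr_suml (bigD1 z r_az) /= mul1r.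
apply: ler_wpDl q_ge0 (ler_sum _ _) => z' /andP[_ z'_neq].
by apply: indist_le; rewrite (r_eq_one scheme) eq_sym.
Qed.

Lemma card_le_without_small_pairs l s (m0 K q : R) :
  s != one -> (1 < l)%N -> 0 <= m0 -> 0 <= q ->
  (forall g, g != one -> m0 <= (n_ g)%:R <= K /\ (indist r star g)%:R <= q) ->
  (forall v, v != one -> v != star s -> ~~ small_pair r one l s v) ->
  (#|I|%:R - 2) * ((l%:R - 1) * (m0 * m0) - l%:R ^+ 2 / 4 * K) <= K * K * q.
Proof.
move=> s_neq1 l_gt1 m0_ge0 q_ge0 bounds no_small.
have [surj _ _ _] := scheme; have [a _] := surj one.
have n_bounds g : g != one -> m0 <= (n_ g)%:R by move/bounds=> [/andP[]].
have n_le g : g != one -> (n_ g)%:R <= K by move/bounds=> [/andP[]].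
have K_ge0 : 0 <= K by rewrite (le_trans m0_ge0) // (le_trans (n_bounds s s_neq1)) ?n_le.
have star_s_neq1 : star s != one by rewrite (star_eq_one scheme).
pose P v := (v != one) && (v != star s).
have card_P : #|I|%:R - 2 = \sum_(v | P v) 1 :> R.
  rewrite -sum1_card (bigD1 one) //= (bigD1 (star s)) //=.
  by rewrite addnA natrD addrC addKr natr_sum.
rewrite card_P mulr_suml.
apply: (@le_trans _ _ (\sum_v (npairs a s v)%:R)).
  rewrite [X in _ <= X](bigID P) /= ler_wpDr ?sumr_ge0 //.
  apply: ler_sum => v /andP[v_neq1 v_neq]; rewrite mul1r.
  apply: le_trans (npairs_ge a v_neq (no_small v v_neq1 v_neq) K_ge0 n_le).
  rewrite lerD2r ler_wpM2l ?subr_ge0 ?ler1n 1?ltnW // natrM.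
  by apply: ler_pM; rewrite ?n_bounds.
apply: le_trans (sum_npairs_le a s q_ge0 _) _ => [g /bounds[] //|].
by rewrite expr2 ler_wpM2r // ler_pM ?n_le.
Qed.

End SchemeEstimates.

Theorem theorem1p3 (R : realFieldType) (X I : finType) (r : X -> X -> I)
    (one : I) (star : I -> I) (c k l : nat) (d1 d1' d2' : R) :
  is_assoc_scheme r one star ->
  0 < d1 <= 1 -> 0 < d1' <= 1 -> 0 < d2' <= 1 ->
  (1 < l)%N -> l%:R < (d1 ^+ 2 / d1') * k%:R ->
  (forall g : I, g != one ->
     d1 * k%:R <= (valency r one star g)%:R <= d1' * k%:R /\
     (indist r star g)%:R <= d2' * c%:R) ->
  2 * (d1' / d1) ^+ 3 * d2' * (c%:R / (l%:R - 1)) + 2 <= (#|I|)%:R ->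
  exists u v w w' : I,
    [/\ [&& u != one, v != one, w != one & w' != one],
        (u != v) && (w != w'),
        (0 < inum r w (star u) v)%N,
        (inum r w (star u) v <= inum r w' (star u) v)%N &
        (inum r w' (star u) v < l)%N].
Proof.
move=> scheme /andP[d1_gt0 _] /andP[d1'_gt0 _] /andP[d2'_gt0 _] l_gt1 l_lt bounds card_I.
have l_ge2 : 2 <= l%:R :> R by rewrite ler_nat.
have k_gt0 : 0 < k%:R :> R.
  by rewrite ltr0n lt0n; apply: contraTneq l_lt => ->; rewrite mulr0 -leNgt; lra.
have lhs_ge0 : 0 <= 2 * (d1' / d1) ^+ 3 * d2' * (c%:R / (l%:R - 1)).
  have C_ge0 : 0 <= c%:R / (l%:R - 1) :> R by rewrite divr_ge0 // subr_ge0; lra.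
  have E_ge0 : 0 <= d1' / d1 by rewrite divr_ge0 ?ltW.
  apply: (mulr_ge0 _ C_ge0); apply: (mulr_ge0 _ (ltW d2'_gt0)).
  by apply: mulr_ge0 => //; apply: exprn_ge0.
have [s s_neq1] : exists s, s != one.
  have /card_gt1P[x [y [_ _ x_neq_y]]] : (1 < #|I|)%N by rewrite -(ltr_nat R); lra.
  by have [x1 | ] := eqVneq x one; [exists y; rewrite -x1 eq_sym | exists x].
have [/andP[n_s_ge n_s_le] _] := bounds s s_neq1.
have d1_le : d1 <= d1' by rewrite -(ler_pM2r k_gt0) (le_trans n_s_ge).
have [c0 | c_gt0] := posnP c.
  have n_s_le1 : (valency r one star s <= 1)%N.
    by apply: (valency_le1 scheme) => g /bounds[_]; rewrite c0 mulr0 lern0 => /eqP.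
  have : d1 * (d1 * k%:R) <= d1.
    by rewrite ger_pMr // (le_trans n_s_ge) ?lern1.
  by move: l_lt; rewrite mulrAC ltr_pdivlMr //; nra.
case: (boolP [exists v, [&& v != one, v != star s & small_pair r one l s v]]).
  case/existsP=> v /and3P[v_neq1 v_neq /existsP[w /existsP[w' /andP[]]]].
  move=> /and3P[w_neq1 w'_neq1 w_neq_w'] /and3P[inum_gt0 inum_le inum_lt].
  exists (star s), v, w, w'; rewrite (starK scheme) (star_eq_one scheme) (eq_sym (star s)).
  by rewrite s_neq1 v_neq1 w_neq1 w'_neq1 w_neq_w' v_neq.
move=> no_small; exfalso.
apply: (counting_absurd (m := #|I|%:R - 2) (L := l%:R) (K := k%:R)
          (d1 := d1) (d1' := d1') (d2' := d2') (c := c%:R)) => //.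
- by rewrite d1_gt0.
- by rewrite ltr0n.
- by rewrite lerBrDr.
apply: (card_le_without_small_pairs scheme s_neq1 l_gt1) => //.
1,2: by rewrite mulr_ge0 // ltW.
move=> v v_neq1 v_neq; apply: contraNN no_small => small.
by apply/existsP; exists v; rewrite v_neq1 v_neq.
Qed.
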